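(* For $n\ge2$ and $1\le\ell\le n-1$, let $t_{n,\ell}$ be the number of permutations $\sigma$ of $\{1,\dots,n\}$ avoiding both $1243$ and $1324$ such that $\sigma^{-1}(n)-\sigma^{-1}(1)=1$ (i.e., $1$ is immediately to the left of $n$) and $\sigma(1)=\ell$. Then for $3\le\ell\le n-2$, \[ t_{n,\ell}=t_{n,\ell-1}+t_{n-1,\ell}. \]
   Context: A permutation avoids a pattern $p$ if no subsequence of its one-line notation is order-isomorphic to $p$. *)

From mathcomp Require Import all_boot all_fingroup.
Set Implicit Arguments. Unset Strict Implicit. Unset Printing Implicit Defensive.

(* Permutations of {1,...,n} are modelled as s : 'S_n acting on 'I_n = {0,...,n-1};
   the value v : 'I_n stands for v+1 and the position i stands for position i+1.
   One-line notation of s is s 0, s 1, ..., s (n-1). *)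

Definition contains (n : nat) (s : 'S_n) (p : seq nat) : bool :=
  [exists f : {ffun 'I_(size p) -> 'I_n},
    [forall a : 'I_(size p), forall b : 'I_(size p),
       ((a < b) ==> (f a < f b)) &&
       ((s (f a) < s (f b)) == (nth 0 p a < nth 0 p b))]].

Definition avoids (n : nat) (s : 'S_n) (p : seq nat) : bool := ~~ contains s p.

(* In 0-based terms: sigma^{-1}(n-1) = sigma^{-1}(0) + 1 and sigma(0) = l - 1. *)
Definition t_count (n l : nat) : nat :=
  #|[set s : 'S_n | [&& avoids s [:: 1; 2; 4; 3],
                        avoids s [:: 1; 3; 2; 4],
                        [exists i : 'I_n, exists j : 'I_n,
                              [&& s i == 0 :> nat, s j == n.-1 :> nat & j == i.+1 :> nat]]
                      & [exists i : 'I_n, (i == 0 :> nat) && (s i == l.-1 :> nat)] ] ]|.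

(* Write a permutation of {0, ..., n} in one-line notation as [j :: map (bump j) t],
   with t a permutation of {0, ..., n-1}, and call a permutation admissible when it
   avoids 1243 and 1324 and its entry 0 immediately precedes its maximum.  As j comes
   first, the word avoids 1243 and 1324 iff t does and the entries >= j of t avoid 132
   and 213; for 0 < j < n the adjacency condition also passes between word and t.
   Hence t_{n,l} counts the admissible t of size n-1 whose entries >= l-1 avoid 132 and
   213.  That condition is upward closed in the bound, with least bound c(t), so the
   recurrence amounts to: the admissible s of size m with c(s) = L are as many as the
   admissible t of size m-1 with c(t) <= L.  Indeed, if d(t) is one more than the
   largest smaller entry of an inversion of t, then c(j :: t) is j+1, c(t) or j
   according as j < d(t), j = d(t) or j > d(t), so exactly one first entry j gives
   c = L. *)

From mathcomp Require Import all_boot all_fingroup.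
From mathcomp Require Import zify boolp.
Set Implicit Arguments. Unset Strict Implicit. Unset Printing Implicit Defensive.

Definition before (t : seq nat) a b := [&& a \in t, b \in t & index a t < index b t].
Definition occurs3 t a b c := before t a b && before t b c.
Definition occurs4 t a b c d := [&& before t a b, before t b c & before t c d].

Definition pat_132_213 a b c := (a < c < b) || (b < a < c).
Definition pat_1243_1324 a b c d :=
  [&& a < b, b < d & d < c] || [&& a < c, c < b & b < d].

Definition avoids_1243_1324 t :=
  ~ exists a b c d, occurs4 t a b c d /\ pat_1243_1324 a b c d.
Definition avoids_132_213_ge L t :=
  ~ exists a b c, [/\ occurs3 t a b c, L <= a, L <= b, L <= c & pat_132_213 a b c].
Definition has_inversion_ge v t := exists a b, [/\ before t a b, v <= b & b < a].

Definition min_before_max n t := index n.-1 t = (index 0 t).+1.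
Definition admissible n t := avoids_1243_1324 t /\ min_before_max n t.

Definition cons_bump j t := j :: map (bump j) t.
Definition perms n := permutations (iota 0 n).

(** * Occurrences in a sequence *)

Lemma before_trans t b a c : before t a b -> before t b c -> before t a c.
Proof. by rewrite /before => /and3P[-> _ ?] /and3P[_ -> ?] /=; lia. Qed.

Lemma before_total t a b : a \in t -> b \in t -> a != b -> before t a b || before t b a.
Proof.
move=> ta tb ab; rewrite /before ta tb /=; case: ltngtP => // eq_ab.
by rewrite -(nth_index 0 ta) eq_ab nth_index ?eqxx in ab.
Qed.

Lemma before_cons j s a b : j \notin s ->
  before (j :: s) a b = (a == j) && (b \in s) || before s a b.
Proof.
move=> js; rewrite /before /= !inE.
have [-> | aj] := eqVneq a j; have [-> | bj] := eqVneq b j => //=.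
all: by rewrite (negPf js) /= ?andbF ?andbT ?orbF.
Qed.

Lemma occurs3_cons j s a b c : j \notin s ->
  occurs3 (j :: s) a b c = (a == j) && before s b c || occurs3 s a b c.
Proof.
move=> js; rewrite /occurs3 !before_cons //.
have [-> | bj] := eqVneq b j; first by rewrite /before (negPf js) /= !andbF.
rewrite /= andb_orl -andbA; congr (_ && _ || _).
by apply/andb_idl => /and3P[].
Qed.

Lemma occurs4_cons j s a b c d : j \notin s ->
  occurs4 (j :: s) a b c d = (a == j) && occurs3 s b c d || occurs4 s a b c d.
Proof.
move=> js; rewrite /occurs4 -/(occurs3 (j :: s) b c d) occurs3_cons //.
have [-> | bj] := eqVneq b j.
  by rewrite before_cons // /occurs3 /before (negPf js) /= !andbF.
rewrite /= before_cons // andb_orl -andbA; congr (_ && _ || _).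
by apply/andb_idl => /andP[/and3P[]].
Qed.

Section InjectiveImage.

Variables (f : nat -> nat) (inj_f : injective f).

Lemma before_map t a b : before (map f t) (f a) (f b) = before t a b.
Proof. by rewrite /before !mem_map // !index_map. Qed.

Lemma occurs3_map t a b c : occurs3 (map f t) (f a) (f b) (f c) = occurs3 t a b c.
Proof. by rewrite /occurs3 !before_map. Qed.

Lemma occurs4_map t a b c d :
  occurs4 (map f t) (f a) (f b) (f c) (f d) = occurs4 t a b c d.
Proof. by rewrite /occurs4 !before_map. Qed.

Lemma before_map_inv t a b : before (map f t) a b ->
  exists a0 b0, [/\ a = f a0, b = f b0 & before t a0 b0].
Proof.
move=> ab; case/and3P: (ab) => /mapP[a0 _ Ea] /mapP[b0 _ Eb] _.
by exists a0, b0; rewrite -before_map -Ea -Eb.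
Qed.

Lemma occurs3_map_inv t a b c : occurs3 (map f t) a b c ->
  exists a0 b0 c0, [/\ a = f a0, b = f b0, c = f c0 & occurs3 t a0 b0 c0].
Proof.
case/andP=> /before_map_inv[a0 [b0 [-> -> ab]]] /before_map_inv[b1 [c0 [/inj_f <- -> bc]]].
by exists a0, b0, c0; rewrite /occurs3 ab bc.
Qed.

Lemma occurs4_map_inv t a b c d : occurs4 (map f t) a b c d ->
  exists a0 b0 c0 d0,
    [/\ a = f a0, b = f b0, c = f c0, d = f d0 & occurs4 t a0 b0 c0 d0].
Proof.
case/and3P=> /before_map_inv[a0 [b0 [-> -> ab]]] /before_map_inv[b1 [c0 [/inj_f <- -> bc]]].
case/before_map_inv=> [c1 [d0 [/inj_f <- -> cd]]].
by exists a0, b0, c0, d0; rewrite /occurs4 ab bc cd.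
Qed.

End InjectiveImage.

(** * Prepending a first entry *)

Lemma bump_inj j : injective (bump j).
Proof. exact: can_inj (bumpK j). Qed.

Lemma ltn_bump2 j x y : (bump j x < bump j y) = (x < y).
Proof.
by rewrite /bump; case: (leqP j x); case: (leqP j y) => /= *; apply/idP/idP; lia.
Qed.

Lemma ltn_bump j x : (j < bump j x) = (j <= x).
Proof. by rewrite leq_bump /unbump ltnSn subn1. Qed.

Lemma notin_map_bump j t : j \notin map (bump j) t.
Proof. by apply/mapP=> [[x _ /eqP]]; rewrite (negPf (neq_bump j x)). Qed.

Lemma pat_132_213_bump j a b c :
  pat_132_213 (bump j a) (bump j b) (bump j c) = pat_132_213 a b c.
Proof. by rewrite /pat_132_213 !ltn_bump2. Qed.

Lemma pat_1243_1324_bump j a b c d :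
  pat_1243_1324 (bump j a) (bump j b) (bump j c) (bump j d) = pat_1243_1324 a b c d.
Proof. by rewrite /pat_1243_1324 !ltn_bump2. Qed.

Lemma pat_1243_1324_head j b c d :
  pat_1243_1324 j b c d = [&& j < b, j < c, j < d & pat_132_213 b c d].
Proof.
by rewrite /pat_1243_1324 /pat_132_213; apply/idP/idP;
  [case/orP=> /and3P[*] | case/and4P=> ? ? ? /orP[] /andP[*]]; lia.
Qed.

Lemma avoids_1243_1324_map_bump j t :
  avoids_1243_1324 (map (bump j) t) <-> avoids_1243_1324 t.
Proof.
split=> H [a [b [c [d [occ pat]]]]]; apply: H.
- exists (bump j a), (bump j b), (bump j c), (bump j d).
  by rewrite occurs4_map ?pat_1243_1324_bump //; exact: bump_inj.
- case: (occurs4_map_inv (@bump_inj j) occ) pat => a0 [b0 [c0 [d0 [-> -> -> -> occ0]]]].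
  by exists a0, b0, c0, d0; rewrite -(pat_1243_1324_bump j).
Qed.

Lemma avoids_132_213_ge_map_bump L j t :
  avoids_132_213_ge L (map (bump j) t) <-> avoids_132_213_ge (unbump j L) t.
Proof.
split=> H [a [b [c [occ La Lb Lc pat]]]]; apply: H.
- exists (bump j a), (bump j b), (bump j c).
  by rewrite occurs3_map ?pat_132_213_bump ?leq_bump //; exact: bump_inj.
- case: (occurs3_map_inv (@bump_inj j) occ) La Lb Lc pat => a0 [b0 [c0 [-> -> -> occ0]]].
  by rewrite !leq_bump pat_132_213_bump; exists a0, b0, c0.
Qed.

Lemma avoids_1243_1324_cons j s : j \notin s ->
  avoids_1243_1324 (j :: s) <-> avoids_1243_1324 s /\
  ~ exists b c d, [/\ occurs3 s b c d, j < b, j < c, j < d & pat_132_213 b c d].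
Proof.
move=> js; split.
- move=> H; split=> [[a [b [c [d [occ pat]]]]] | [b [c [d [occ jb jc jd pat]]]]]; apply: H.
  + by exists a, b, c, d; rewrite occurs4_cons // occ orbT.
  + by exists j, b, c, d; rewrite occurs4_cons // eqxx occ pat_1243_1324_head jb jc jd.
- case=> H1 H2 [a [b [c [d]]]]; rewrite occurs4_cons //.
  case=> /orP[/andP[/eqP-> occ] | occ] pat.
  + by apply: H2; exists b, c, d; move: pat; rewrite pat_1243_1324_head => /and4P[].
  + by apply: H1; exists a, b, c, d.
Qed.

Lemma avoids_132_213_ge_cons L j s : j \notin s ->
  avoids_132_213_ge L (j :: s) <-> avoids_132_213_ge L s /\
  (L <= j -> ~ exists b c, [/\ before s b c, L <= b, L <= c & pat_132_213 j b c]).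
Proof.
move=> js; split.
- move=> H; split=> [[a [b [c [occ La Lb Lc pat]]]] | Lj [b [c [bc Lb Lc pat]]]]; apply: H.
  + by exists a, b, c; rewrite occurs3_cons // occ orbT.
  + by exists j, b, c; rewrite occurs3_cons // eqxx bc.
- case=> H1 H2 [a [b [c []]]]; rewrite occurs3_cons //.
  case/orP=> [/andP[/eqP-> bc] | occ] La Lb Lc pat.
  + by apply: (H2 La); exists b, c.
  + by apply: H1; exists a, b, c.
Qed.

Lemma avoids_1243_1324_cons_bump j t :
  avoids_1243_1324 (cons_bump j t) <-> avoids_1243_1324 t /\ avoids_132_213_ge j t.
Proof.
rewrite /cons_bump avoids_1243_1324_cons ?notin_map_bump // avoids_1243_1324_map_bump.
split=> -[av H]; split=> // [[a [b [c]]]].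
- case=> occ ja jb jc pat; apply: H; exists (bump j a), (bump j b), (bump j c).
  by rewrite occurs3_map ?pat_132_213_bump ?ltn_bump //; exact: bump_inj.
- case=> /(occurs3_map_inv (@bump_inj j)) [a0 [b0 [c0 [-> -> -> occ]]]].
  by rewrite !ltn_bump pat_132_213_bump => ja jb jc pat; apply: H; exists a0, b0, c0.
Qed.

Lemma avoids_132_213_ge_cons_bump L j t :
  avoids_132_213_ge L (cons_bump j t) <->
  avoids_132_213_ge (unbump j L) t /\
  (L <= j -> ~ exists b c, [/\ before t b c, L <= bump j b, L <= bump j c &
                               pat_132_213 j (bump j b) (bump j c)]).
Proof.
rewrite /cons_bump avoids_132_213_ge_cons ?notin_map_bump // avoids_132_213_ge_map_bump.
split=> -[C H]; split=> // Lj [b [c [bc Lb Lc pat]]]; apply: (H Lj).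
- by exists (bump j b), (bump j c); rewrite before_map //; exact: bump_inj.
- by case/(before_map_inv (@bump_inj j)): bc Lb Lc pat => b0 [c0 [-> -> bc]]; exists b0, c0.
Qed.

(** * Inversion levels *)

Lemma avoids_132_213_ge_mono L L' t :
  L <= L' -> avoids_132_213_ge L t -> avoids_132_213_ge L' t.
Proof.
move=> LL' H [a [b [c [occ La Lb Lc pat]]]]; apply: H.
by exists a, b, c; split=> //; apply: leq_trans LL' _.
Qed.

Lemma has_inversion_ge_mono u v t : u <= v -> has_inversion_ge v t -> has_inversion_ge u t.
Proof. by move=> uv [a [b [ab vb ba]]]; exists a, b; split=> //; apply: leq_trans vb. Qed.

Lemma avoids_132_213_ge_no_inversion v t :
  ~ has_inversion_ge v t -> avoids_132_213_ge v t.
Proof.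
move=> H [a [b [c [/andP[ab bc] va vb vc /orP[] /andP[] *]]]]; apply: H.
- by exists b, c.
- by exists a, b.
Qed.

Lemma avoids_132_213_ge_between L t b c v : avoids_132_213_ge L t ->
  before t b c -> b < v < c -> v \in t -> L <= b -> before t b v && before t v c.
Proof.
move=> C bc /andP[bv vc] tv Lb; case/and3P: (bc) => tb tc _.
have /orP[vb | bv'] := before_total tv tb (negbT (gtn_eqF bv)).
  by case: C; exists v, b, c; rewrite /occurs3 vb bc /pat_132_213 bv vc; split=> //; lia.
have /orP[vc' | cv] := before_total tv tc (negbT (ltn_eqF vc)); first by rewrite bv' vc'.
by case: C; exists b, c, v; rewrite /occurs3 bc cv /pat_132_213 bv vc; split=> //; lia.
Qed.

Lemma avoids_132_213_ge_cons_bump_inversion L j t :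
  has_inversion_ge j t -> avoids_132_213_ge j t ->
  avoids_132_213_ge L (cons_bump j t) <-> j < L.
Proof.
move=> [a [b [ab jb ba]]] C; rewrite avoids_132_213_ge_cons_bump /unbump.
case: (leqP L j) => Lj; last first.
  by split=> // _; split=> //; apply: avoids_132_213_ge_mono C; lia.
split=> // -[_ /(_ isT)]; case; exists a, b.
have ja : j <= a by apply: leq_trans (ltnW ba).
by rewrite /bump ja jb /= /pat_132_213 ab; split=> //; lia.
Qed.

Lemma avoids_132_213_ge_cons_bump_no_inversion L j t y :
  0 < j -> ~ has_inversion_ge j.-1 t -> j.-1 \in t -> y \in t -> j <= y ->
  avoids_132_213_ge L (cons_bump j t) <-> j <= L.
Proof.
move=> j0 D tj ty jy; rewrite avoids_132_213_ge_cons_bump /unbump.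
case: (ltnP L j) => Lj.
  split=> // -[_ /(_ (ltnW Lj))]; case.
  have jy1 : j.-1 != y by lia.
  have /orP[jy' | yj] := before_total tj ty jy1.
    have jj : (j <= j.-1) = false by lia.
    by exists j.-1, y; rewrite /bump jj jy /pat_132_213 /=; split=> //; lia.
  by case: D; exists y, j.-1; split=> //; lia.
split=> // jL; split.
  by apply: avoids_132_213_ge_mono (avoids_132_213_ge_no_inversion D); lia.
move=> Lj' [b [c [bc]]]; rewrite /bump /pat_132_213.
case: (leqP j b); case: (leqP j c) => /= jc jb Lb Lc /orP[] /andP[*];
  first [lia | by case: D; exists b, c; split=> //; lia].
Qed.

Lemma avoids_132_213_ge_cons_bump_last_inversion L j t :
  ~ has_inversion_ge j t -> has_inversion_ge j.-1 t ->
  avoids_132_213_ge L (cons_bump j t) <-> avoids_132_213_ge L t.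
Proof.
move=> nD [y [z [yz jz zy]]].
have Cj := avoids_132_213_ge_no_inversion nD.
have zj : z = j.-1 by case: (leqP j z) => jz'; [case: nD; exists y, z | lia].
subst z; have jy : j <= y.
  by case: (leqP j y) => // yj; case: nD; exists y, j.-1; split=> //; lia.
rewrite avoids_132_213_ge_cons_bump /unbump; case: (leqP L j) => Lj; last first.
  by split=> _; [|split=> //]; apply: avoids_132_213_ge_mono Cj; lia.
rewrite subn0; split=> [[] // | CL]; split=> // _ [b [c [bc]]]; rewrite /bump /pat_132_213.
case: (leqP j b); case: (leqP j c) => /= jc jb Lb Lc /orP[] /andP[] // *; try lia.
all: try by case: nD; exists b, c; split=> //; lia.
(* Only the 213 case [bump j b < j < bump j c] is left; the top inversion (y, j.-1)
   followed by c then yields a 213 pattern or an inversion at level j. *)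
have jc1 : before t j.-1 c.
  have [<- // | bj] := eqVneq b j.-1.
  have tj : j.-1 \in t by case/and3P: yz.
  have bjc : b < j.-1 < c by lia.
  by case/andP: (avoids_132_213_ge_between CL bc bjc tj Lb).
have yc := before_trans yz jc1.
case: (ltngtP y c) => [yc' | cy | eyc].
- by case: CL; exists y, j.-1, c; rewrite /occurs3 yz jc1 /pat_132_213; split=> //; lia.
- by case: nD; exists y, c.
- by rewrite eyc /before ltnn !andbF in yc.
Qed.

Lemma index_cons_bump j t x : index (bump j x) (cons_bump j t) = (index x t).+1.
Proof. by rewrite /= (negPf (neq_bump j x)) index_map //; exact: bump_inj. Qed.

Lemma admissible_cons_bump m j t : 0 < j < m ->
  admissible m.+1 (cons_bump j t) <-> admissible m t /\ avoids_132_213_ge j t.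
Proof.
case/andP=> j0 jm; rewrite /admissible avoids_1243_1324_cons_bump /min_before_max.
have i0 : index 0 (cons_bump j t) = (index 0 t).+1.
  by rewrite -(index_cons_bump j) /bump leqNgt j0.
have im : index m (cons_bump j t) = (index m.-1 t).+1.
  have jm' : j <= m.-1 by lia.
  by rewrite -(index_cons_bump j) /bump jm'; congr index; lia.
by rewrite i0 im; split=> -[[? ?] ?]; do !split => //; lia.
Qed.

Lemma admissible_cons_bump0 m L t :
  admissible m (cons_bump 0 t) -> 0 < L -> avoids_132_213_ge L (cons_bump 0 t).
Proof.
case=> /avoids_1243_1324_cons_bump[_ C] _ L0; apply/avoids_132_213_ge_cons_bump.
by rewrite leqNgt L0; split=> //; apply: avoids_132_213_ge_mono C.
Qed.

Lemma not_admissible_cons_bump_max m t : ~ admissible m.+1 (cons_bump m t).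
Proof. by case=> _; rewrite /min_before_max /= eqxx. Qed.

(** * Decomposing permutations by their first entry *)

Lemma mem_perms n s : s \in perms n <-> uniq s /\ forall x, (x \in s) = (x < n).
Proof.
rewrite mem_permutations; split=> [pn | [su sn]].
- by rewrite (perm_uniq pn) iota_uniq; split=> // x; rewrite (perm_mem pn) mem_iota.
- by apply: uniq_perm; rewrite ?iota_uniq // => x; rewrite sn mem_iota.
Qed.

Lemma cons_bump_perms n j t : j <= n -> t \in perms n -> cons_bump j t \in perms n.+1.
Proof.
move=> jn /mem_perms[tu tn]; apply/mem_perms; split.
  by rewrite /= notin_map_bump map_inj_uniq //; exact: bump_inj.
move=> x; rewrite inE; have [-> | xj] := eqVneq x j; first by rewrite ltnS jn.
apply/mapP/idP => [[y ty ->] | xn].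
  by move: ty; rewrite tn /bump; case: leqP => /=; lia.
exists (unbump j x); last by rewrite unbumpK // inE.
by rewrite tn /unbump; move: xj => /eqP; case: ltnP => /=; lia.
Qed.

Lemma perms_cons_bump_inv n s : s \in perms n.+1 ->
  exists j t, [/\ j <= n, t \in perms n & s = cons_bump j t].
Proof.
case/mem_perms; case: s => [|j s] /=; first by move=> _ /(_ 0).
case/andP=> js su sn; exists j, (map (unbump j) s).
have sj x : x \in s -> x != j by apply: contraTneq => ->.
have unbumpK_s : {in s, cancel (unbump j) (bump j)} by move=> x /sj; apply: unbumpK.
have jn : j < n.+1 by rewrite -sn mem_head.
split=> //.
- apply/mem_perms; split; first by rewrite (map_inj_in_uniq (can_in_inj unbumpK_s)).
  move=> x; apply/mapP/idP => [[y sy ->] | xn].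
    have := sn y; rewrite inE sy orbT /unbump => /esym yn.
    by move: (sj y sy) => /eqP; case: (ltnP j y) => /=; lia.
  exists (bump j x); last by rewrite bumpK.
  have := sn (bump j x); rewrite inE eq_sym (negPf (neq_bump j x)) /= => ->.
  by rewrite /bump; case: (leqP j x) => /=; lia.
- by rewrite /cons_bump -map_comp (map_id_in unbumpK_s).
Qed.

Lemma perms_cons_bump n :
  perm_eq (perms n.+1) [seq cons_bump j t | j <- iota 0 n.+1, t <- perms n].
Proof.
apply: uniq_perm; first exact: permutations_uniq.
  apply: allpairs_uniq; rewrite ?iota_uniq ?permutations_uniq // => -[j t] [j' t'] _ _ /=.
  by case=> <- /(inj_map (@bump_inj j)) ->.
move=> s; apply/idP/allpairsP => [/perms_cons_bump_inv[j [t [jn tp ->]]] | [[j t]]].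
  by exists (j, t); rewrite mem_iota ltnS.
by rewrite mem_iota ltnS => -[/= jn tp ->]; apply: cons_bump_perms.
Qed.

Lemma count_perms_cons_bump n (P : pred (seq nat)) :
  count P (perms n.+1) = \sum_(j <- iota 0 n.+1) count (P \o cons_bump j) (perms n).
Proof.
rewrite (seq.permP (perms_cons_bump n)) count_flatten sumnE !big_map.
by apply: eq_bigr => j _; rewrite count_map.
Qed.

Lemma count_sumE (T : Type) (a : pred T) s : count a s = \sum_(x <- s) a x.
Proof. by rewrite -sumn_count sumnE big_map. Qed.

(** * Thresholds and the counting argument *)

Lemma nat_threshold (P : nat -> Prop) :
  (forall u v, u <= v -> P u -> P v) -> (exists v, P v) ->
  exists k, forall v, P v <-> k <= v.
Proof.
move=> mono [v0 Pv0]; have exP : exists v, `[< P v >] by exists v0; apply/asboolP.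
case: (ex_minnP exP) => k /asboolP Pk min_k; exists k => v.
by split=> [Pv | /mono]; [apply: min_k; apply/asboolP | apply].
Qed.

Lemma avoids_132_213_ge_threshold m t : t \in perms m ->
  exists c, forall v, avoids_132_213_ge v t <-> c <= v.
Proof.
case/mem_perms=> _ tm; apply: nat_threshold => [u v|]; first exact: avoids_132_213_ge_mono.
exists m => -[a [b [c [/andP[/and3P[ta _ _] _] ma _ _ _]]]].
by rewrite tm ltnNge ma in ta.
Qed.

Lemma has_inversion_ge_threshold m t : t \in perms m ->
  exists2 d, d <= m.-1 & forall v, has_inversion_ge v t <-> v < d.
Proof.
case/mem_perms=> _ tm.
have no_inv : ~ has_inversion_ge m.-1 t.
  by case=> a [b [/and3P[ta _ _] mb ba]]; rewrite tm in ta; lia.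
have [d Hd] : exists d, forall v, ~ has_inversion_ge v t <-> d <= v.
  apply: nat_threshold; last by exists m.-1.
  by move=> u v uv nu /(has_inversion_ge_mono uv).
exists d; first exact/Hd.
by move=> v; rewrite -(not_notP (has_inversion_ge v t)) Hd ltnNge; split=> /negP.
Qed.

Definition cons_bump_threshold c d j := if j < d then j.+1 else if j == d then c else j.

Section FixedTail.

Variables (m : nat) (t : seq nat) (c d : nat).
Hypotheses (tp : t \in perms m)
           (Hc : forall v, avoids_132_213_ge v t <-> c <= v)
           (Hd : forall v, has_inversion_ge v t <-> v < d).

Lemma avoids_132_213_ge_cons_bump_threshold j L : 0 < j < m -> c <= j ->
  avoids_132_213_ge L (cons_bump j t) <-> cons_bump_threshold c d j <= L.
Proof.
case/mem_perms: tp => _ tm /andP[j0 jm] cj; rewrite /cons_bump_threshold.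
case: (ltngtP j d) => [jd | dj | jd].
- by apply: avoids_132_213_ge_cons_bump_inversion; [apply/Hd | apply/Hc].
- by apply: (@avoids_132_213_ge_cons_bump_no_inversion _ _ _ m.-1); rewrite ?Hd ?tm //; lia.
- by rewrite avoids_132_213_ge_cons_bump_last_inversion ?Hd ?jd ?ltnn //; lia.
Qed.

Lemma cons_bump_exactE j L : 1 < L -> j <= m ->
  `[< admissible m.+1 (cons_bump j t) /\ avoids_132_213_ge L (cons_bump j t) /\
      ~ avoids_132_213_ge L.-1 (cons_bump j t) >] =
  `[< admissible m t >] && [&& 0 < j < m, c <= j & cons_bump_threshold c d j == L].
Proof.
move=> L1 jm; have [-> | j0] := posnP j.
  rewrite andbF; apply: asboolF => -[adm [_]]; case.
  by apply: admissible_cons_bump0 adm _; lia.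
have [-> | jm'] := eqVneq j m.
  by rewrite ltnn andbF /= andbF; apply: asboolF => -[/not_admissible_cons_bump_max].
have jm1 : j < m by rewrite ltn_neqAle jm' jm.
have j0m : 0 < j < m by rewrite j0.
have Hcb := avoids_132_213_ge_cons_bump_threshold _ j0m.
rewrite jm1 /=; apply/asboolP/and3P.
  case=> /(admissible_cons_bump _ j0m)[adm /Hc cj].
  by rewrite !(Hcb _ cj) => -[? ?]; split; [exact/asboolP | | apply/eqP; lia].
case=> /asboolP adm cj /eqP kL.
by rewrite admissible_cons_bump // Hc !(Hcb _ cj); do !split=> //; lia.
Qed.

End FixedTail.

Lemma count_cons_bump_threshold m c d L : c <= d -> d < m -> 1 < L -> L < m ->
  count (fun j => [&& 0 < j < m, c <= j & cons_bump_threshold c d j == L]) (iota 0 m.+1)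
  = (c <= L).
Proof.
move=> cd dm L1 Lm; rewrite /cons_bump_threshold.
case: (leqP c L) => cL; last first.
  rewrite (eq_count (a2 := pred0)) ?count_pred0 // => j /=.
  by case: (ltngtP j d) => jd; apply/negP; lia.
pose j0 := if d < L then L else if c == L then d else L.-1.
rewrite (eq_count (a2 := pred1 j0)) => [|j /=].
  rewrite count_uniq_mem ?iota_uniq // mem_iota /j0.
  by case: (ltnP d L); case: (c =P L); lia.
by rewrite /j0; case: (ltngtP j d); case: (ltnP d L); case: (c =P L);
  intros; apply/idP/idP; lia.
Qed.

Lemma count_cons_bump_exact m L t : t \in perms m -> 1 < L < m ->
  count (fun j => `[< admissible m.+1 (cons_bump j t) /\
                      avoids_132_213_ge L (cons_bump j t) /\
                      ~ avoids_132_213_ge L.-1 (cons_bump j t) >]) (iota 0 m.+1) =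
  `[< admissible m t /\ avoids_132_213_ge L t >].
Proof.
move=> tp /andP[L1 Lm].
have [c Hc] := avoids_132_213_ge_threshold tp.
have [d dm Hd] := has_inversion_ge_threshold tp.
have cd : c <= d by apply/Hc/avoids_132_213_ge_no_inversion; rewrite Hd ltnn.
rewrite (eq_in_count (a2 := fun j => `[< admissible m t >] &&
           [&& 0 < j < m, c <= j & cons_bump_threshold c d j == L])) => [|j]; last first.
  by rewrite mem_iota ltnS => /andP[_ jm]; exact: cons_bump_exactE.
rewrite asbool_and (asbool_equiv_eqP idP (Hc L)).
case: asboolP => adm; last by rewrite (eq_count (a2 := pred0)) ?count_pred0.
by apply: count_cons_bump_threshold => //; lia.
Qed.

Definition admissible_count m L :=
  count (fun t => `[< admissible m t /\ avoids_132_213_ge L t >]) (perms m).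

Lemma count_admissible_exact m L : 1 < L < m ->
  count (fun s => `[< admissible m.+1 s /\ avoids_132_213_ge L s /\
                     ~ avoids_132_213_ge L.-1 s >]) (perms m.+1) =
  admissible_count m L.
Proof.
move=> Lm; rewrite count_perms_cons_bump (eq_bigr _ (fun j _ => count_sumE _ _)).
rewrite exchange_big /admissible_count count_sumE; apply: eq_big_seq => t tp.
by rewrite -count_sumE count_cons_bump_exact.
Qed.

Lemma admissible_count_rec m L : 1 < L < m ->
  admissible_count m.+1 L = admissible_count m.+1 L.-1 + admissible_count m L.
Proof.
move=> Lm; rewrite -(count_admissible_exact Lm) /admissible_count !count_sumE -big_split.
apply: eq_bigr => s _ /=; have mono := @avoids_132_213_ge_mono L.-1 L s (leq_pred L).
by do 3 case: asboolP => ? //=; tauto.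
Qed.

Lemma count_head_admissible n L : 0 < L < n ->
  count (fun s => `[< admissible n.+1 s >] && (head 0 s == L)) (perms n.+1) =
  admissible_count n L.
Proof.
move=> Ln; have Liota : L \in iota 0 n.+1 by rewrite mem_iota; lia.
rewrite count_perms_cons_bump (bigD1_seq L) ?iota_uniq //=.
rewrite big1_seq ?addn0 => [|j /andP[jL _]].
  apply: eq_count => t /=; rewrite eqxx andbT.
  exact: asbool_equiv_eq (admissible_cons_bump t Ln).
by rewrite (eq_count (a2 := pred0)) ?count_pred0 // => t /=; rewrite (negPf jL) andbF.
Qed.

(** * One-line notation *)

Section OneLine.

Variable n : nat.
Implicit Types s : 'S_n.

Definition oneline s : seq nat := [seq nat_of_ord (s i) | i <- enum 'I_n].

Lemma size_oneline s : size (oneline s) = n.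
Proof. by rewrite size_map size_enum_ord. Qed.

Lemma nth_oneline s (i : 'I_n) : nth 0 (oneline s) i = s i.
Proof. by rewrite (nth_map i) ?size_enum_ord // nth_ord_enum. Qed.

Lemma oneline_uniq s : uniq (oneline s).
Proof. by rewrite map_inj_uniq ?enum_uniq // => i j /val_inj/perm_inj. Qed.

Lemma mem_oneline s (i : 'I_n) : nat_of_ord (s i) \in oneline s.
Proof. by apply: map_f; rewrite mem_enum. Qed.

Lemma index_oneline s (i : 'I_n) : index (nat_of_ord (s i)) (oneline s) = i.
Proof. by rewrite -(nth_oneline s) index_uniq ?size_oneline ?oneline_uniq. Qed.

Lemma before_oneline s (i j : 'I_n) : before (oneline s) (s i) (s j) = (i < j).
Proof. by rewrite /before !mem_oneline !index_oneline. Qed.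

Lemma oneline_perms s : oneline s \in perms n.
Proof.
apply/mem_perms; split=> [|x]; first exact: oneline_uniq.
apply/mapP/idP => [[i _ ->] // | xn].
by exists ((s^-1)%g (Ordinal xn)); rewrite ?mem_enum ?permKV.
Qed.

Lemma oneline_inj : injective oneline.
Proof. by move=> s1 s2 E; apply/permP => i; apply: ord_inj; rewrite -!nth_oneline E. Qed.

Lemma card_oneline (P : pred (seq nat)) :
  #|[set s | P (oneline s)]| = count P (perms n).
Proof.
set ol := map oneline (enum 'S_n).
have ol_uniq : uniq ol by rewrite map_inj_uniq ?enum_uniq //; exact: oneline_inj.
have ol_sub : {subset ol <= perms n} by move=> _ /mapP[s _ ->]; exact: oneline_perms.
have ol_size : size (perms n) <= size ol.
  by rewrite size_map -cardE card_Sn size_permutations ?iota_uniq // size_iota.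
have [_ ol_eq] := uniq_min_size ol_uniq ol_sub ol_size.
rewrite -(seq.permP (uniq_perm ol_uniq (permutations_uniq _) ol_eq)) count_map.
by rewrite enumT cardsE cardE /enum_mem size_filter.
Qed.

End OneLine.

Definition order_isomorphic (u p : seq nat) := size u = size p /\
  forall x y, x < size p -> y < size p -> (nth 0 u x < nth 0 u y) = (nth 0 p x < nth 0 p y).

Lemma containsP n (s : 'S_n) p : contains s p <->
  exists u, [/\ {subset u <= oneline s}, sorted (before (oneline s)) u &
                order_isomorphic u p].
Proof.
split=> [/existsP[f /forallP H] | [u [sub srt [su iso]]]].
  have Hf (a b : 'I_(size p)) := andP (forallP (H a) b).
  pose u := [seq nat_of_ord (s (f a)) | a <- enum 'I_(size p)].
  have nth_u (a : 'I_(size p)) : nth 0 u a = s (f a).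
    by rewrite (nth_map a) ?size_enum_ord // nth_ord_enum.
  exists u; split=> [_ /mapP[a _ ->] | | ]; first exact: mem_oneline.
    apply/(sortedP 0) => i; rewrite size_map size_enum_ord => ip.
    have [/implyP lt _] := Hf (Ordinal (ltnW ip)) (Ordinal ip).
    by rewrite (nth_u (Ordinal (ltnW ip))) (nth_u (Ordinal ip)) before_oneline lt.
  split=> [|x y xp yp]; first by rewrite size_map size_enum_ord.
  have [_ /eqP] := Hf (Ordinal xp) (Ordinal yp).
  by rewrite (nth_u (Ordinal xp)) (nth_u (Ordinal yp)).
have pos (a : 'I_(size p)) : exists i : 'I_n, nat_of_ord (s i) == nth 0 u a.
  have /sub/mapP[i _ ->] : nth 0 u a \in u by rewrite mem_nth ?su.
  by exists i.
apply/existsP; exists [ffun a => xchoose (pos a)].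
apply/forallP => a; apply/forallP => b; rewrite !ffunE.
rewrite -(before_oneline s) (eqP (xchooseP (pos a))) (eqP (xchooseP (pos b))) iso //.
rewrite eqxx andbT; apply/implyP => ab.
by apply: (sorted_ltn_nth (@before_trans (oneline s)) 0 srt); rewrite ?inE ?su.
Qed.

Lemma contains4 n (s : 'S_n) p0 p1 p2 p3 : contains s [:: p0; p1; p2; p3] <->
  exists a b c d, occurs4 (oneline s) a b c d /\
                  order_isomorphic [:: a; b; c; d] [:: p0; p1; p2; p3].
Proof.
rewrite containsP; split=> [[u [_ srt iso]] | [a [b [c [d [occ iso]]]]]].
  case: iso (iso) srt => + _; case: u => [|a [|b [|c [|d [|? ?]]]]] // _ iso srt.
  by exists a, b, c, d; split=> //; move: srt; rewrite /= andbT.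
exists [:: a; b; c; d]; split=> //; last by move: occ; rewrite /= andbT.
case/and3P: occ => /and3P[ta tb _] /and3P[_ tc _] /and3P[_ td _] x.
by rewrite !inE => /or4P[] /eqP->.
Qed.

Lemma order_isomorphic_1243 a b c d :
  order_isomorphic [:: a; b; c; d] [:: 1; 2; 4; 3] <-> [&& a < b, b < d & d < c].
Proof.
split=> [[_ iso] | abdc]; first by rewrite (iso 0 1) ?(iso 1 3) ?(iso 3 2).
split=> // [[|[|[|[|x]]]]] [|[|[|[|y]]]] //= _ _; apply/idP/idP; lia.
Qed.

Lemma order_isomorphic_1324 a b c d :
  order_isomorphic [:: a; b; c; d] [:: 1; 3; 2; 4] <-> [&& a < c, c < b & b < d].
Proof.
split=> [[_ iso] | acbd]; first by rewrite (iso 0 2) ?(iso 2 1) ?(iso 1 3).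
split=> // [[|[|[|[|x]]]]] [|[|[|[|y]]]] //= _ _; apply/idP/idP; lia.
Qed.

Lemma avoids_1243_1324_onelineE n (s : 'S_n) :
  avoids s [:: 1; 2; 4; 3] && avoids s [:: 1; 3; 2; 4] =
  `[< avoids_1243_1324 (oneline s) >].
Proof.
apply/andP/asboolP => [[/negP A1 /negP A2] [a [b [c [d [occ /orP[] pat]]]]] | av].
- by apply: A1; apply/contains4; exists a, b, c, d; rewrite order_isomorphic_1243.
- by apply: A2; apply/contains4; exists a, b, c, d; rewrite order_isomorphic_1324.
split; apply/negP; rewrite contains4 => -[a [b [c [d [occ]]]]];
  rewrite ?order_isomorphic_1243 ?order_isomorphic_1324 => pat; apply: av;
  by exists a, b, c, d; rewrite /pat_1243_1324 pat ?orbT.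
Qed.

Lemma min_before_max_onelineE n (s : 'S_n) :
  [exists i : 'I_n, exists j : 'I_n,
     [&& s i == 0 :> nat, s j == n.-1 :> nat & j == i.+1 :> nat]] =
  `[< min_before_max n (oneline s) >].
Proof.
apply/existsP/asboolP => [[i /existsP[j /and3P[/eqP si /eqP sj /eqP ji]]] | mbm].
  by rewrite /min_before_max -si -sj !index_oneline.
have i0 : index 0 (oneline s) < n.
  by have := index_size n.-1 (oneline s); rewrite mbm size_oneline.
have im : index n.-1 (oneline s) < n.
  have := index_mem n.-1 (oneline s); rewrite size_oneline => ->.
  by case/mem_perms: (oneline_perms s) => _ ->; lia.
exists (Ordinal i0); apply/existsP; exists (Ordinal im).
rewrite -(nth_oneline s (Ordinal i0)) -(nth_oneline s (Ordinal im)) /=.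
by rewrite !nth_index ?mbm ?eqxx // -index_mem size_oneline.
Qed.

Lemma head_onelineE n (s : 'S_n) v : 0 < n ->
  [exists i : 'I_n, (i == 0 :> nat) && (s i == v :> nat)] = (head 0 (oneline s) == v).
Proof.
move=> n0; apply/existsP/eqP => [[i /andP[/eqP i0 /eqP <-]] | <-].
  by have := nth_oneline s i; rewrite i0 nth0.
exists (Ordinal n0); have := nth_oneline s (Ordinal n0).
by rewrite /= nth0 => ->; rewrite !eqxx.
Qed.

Lemma t_count_perms n l : 0 < n ->
  t_count n l = count (fun t => `[< admissible n t >] && (head 0 t == l.-1)) (perms n).
Proof.
move=> n0; rewrite /t_count -card_oneline; apply: eq_card => s; rewrite !inE andbA.
rewrite avoids_1243_1324_onelineE min_before_max_onelineE head_onelineE //.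
by rewrite asbool_and andbA.
Qed.

Lemma t_count_admissible_count m l : 1 < l <= m -> t_count m.+1 l = admissible_count m l.-1.
Proof. by move=> lm; rewrite t_count_perms // count_head_admissible //; lia. Qed.

Theorem lemma5p5 (n l : nat) (hn : 2 <= n) (hl3 : 3 <= l) (hl : l <= n - 2) :
  t_count n l = t_count n l.-1 + t_count n.-1 l.
Proof.
case: n hn hl => [|[|m]] // _ hl.
rewrite !t_count_admissible_count; try lia.
by apply: admissible_count_rec; lia.
Qed.
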